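(* Let $\mathcal{L}$ be a family of oriented balanced algebraic laws over a signature $\Sigma$, let $\phi$ be an injective endomorphism of the geometry group $G_{\mathcal{L}}$, and let $\mathtt{Cc}:T_\Sigma(x)\to G_{\mathcal{L}}$ be a $\phi$-blueprint for $\mathcal{L}$. Then for all words $w,w'\in\mathcal{W}_{\mathcal{L}}$, if $\mathit{eval}(w)\sim\mathit{eval}(w')$ then $\mathtt{eval}(w)=\mathtt{eval}(w')$ in $G_{\mathcal{L}}$.
   Context: $T_\Sigma(x)$: terms in the single variable $x$ over $\Sigma$ (general terms use an infinite set of variables). A law is balanced if both sides contain the same variables. Addresses are finite sequences of positive integers, $t/\alpha$ the subterm at $\alpha$. For $L=(l,r)\in\mathcal{L}$ and an address $\alpha$, $O^+_{L,\alpha}$ is the partial map sending $t$ with $t/\alpha=l\sigma$ to the term obtained by replacing that subterm by $r\sigma$; $O^-_{L,\alpha}$ is its inverse. $\mathcal{W}_{\mathcal{L}}$ is the free monoid on the letters $O^{\pm}_{L,\alpha}$; $\mathit{eval}(w)$ is the partial map on terms obtained by applying the letters of $w$ left to right; $t\cdot f$ is the image of $t$ under $f$. For partial maps $f,g$ on terms, $f\sim g$ means there is at least one term $u$ on which both are defined and $u\cdot f=u\cdot g$. The geometry group $G_{\mathcal{L}}$ is the group presented by generators $g_{L,\alpha}$ and a set of relations $u=v$ between positive words (in the letters $O^+_{L,\alpha}$) that hold as equalities of partial maps (the confluence relations); $\mathtt{eval}:\mathcal{W}_{\mathcal{L}}\to G_{\mathcal{L}}$ sends $O^+_{L,\alpha}\mapsto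 g_{L,\alpha}$, $O^-_{L,\alpha}\mapsto g_{L,\alpha}^{-1}$. $\mathtt{Cc}$ is a $\phi$-blueprint if $\mathtt{Cc}(t\cdot\mathit{eval}(w))=\mathtt{Cc}(t)\cdot\phi(\mathtt{eval}(w))$ for all $t\in T_\Sigma(x)$ and $w\in\mathcal{W}_{\mathcal{L}}$ with $t\cdot\mathit{eval}(w)$ defined. *)

From mathcomp Require Import all_boot.
Set Implicit Arguments. Unset Strict Implicit. Unset Printing Implicit Defensive.

Section Geometry.

Variable F : Type.
Variable ar : F -> nat.

(** Raw terms over [F] with variables indexed by [nat]; the variable [x] of
    [T_Sigma(x)] is [Var 0]. *)
Inductive term : Type :=
| Var : nat -> term
| App : F -> seq term -> term.

Inductive wf : term -> Prop :=
| wf_var v : wf (Var v)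
| wf_app f ts : size ts = ar f ->
    (forall i, i < size ts -> wf (nth (Var 0) ts i)) -> wf (App f ts).

Inductive occurs (v : nat) : term -> Prop :=
| occ_var : occurs v (Var v)
| occ_app f ts i : i < size ts -> occurs v (nth (Var 0) ts i) -> occurs v (App f ts).

Definition in_Tx (t : term) : Prop := wf t /\ (forall v, occurs v t -> v = 0).

Fixpoint subst (s : nat -> term) (t : term) : term :=
  match t with
  | Var v => s v
  | App f ts => App f (map (subst s) ts)
  end.

Definition address := seq BinNums.positive.

(** [rewr l r t a t']: [t/a = l s] for some substitution [s], and [t'] is
    [t] with that subterm replaced by [r s]. *)
Inductive rewr (l r : term) : term -> address -> term -> Prop :=
| rw_here s : rewr l r (subst s l) [::] (subst s r)
| rw_in f ts1 u u' ts2 p a :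
    nat_of_pos p = (size ts1).+1 ->
    rewr l r u a u' ->
    rewr l r (App f (ts1 ++ u :: ts2)) (p :: a) (App f (ts1 ++ u' :: ts2)).

Variable I : Type.
Variable law : I -> term * term.

Definition balanced (L : term * term) : Prop :=
  forall v, occurs v L.1 <-> occurs v L.2.

(** Generators [g_{L,alpha}] and letters [O^{+-}_{L,alpha}] (true = +). *)
Definition gen := (I * address)%type.
Definition letter := (bool * gen)%type.

(** The partial map [O^+_{L,alpha}] (as its graph). *)
Definition opP (g : gen) (t t' : term) : Prop :=
  rewr (law g.1).1 (law g.1).2 t g.2 t'.

Definition letter_rel (a : letter) (t t' : term) : Prop :=
  if a.1 then opP a.2 t t' else opP a.2 t' t.

(** [eval w] (graph of the partial map, letters applied left to right). *)
Fixpoint evalrel (w : seq letter) : term -> term -> Prop :=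
  match w with
  | [::] => fun t s => t = s
  | a :: w' => fun t s => exists m, letter_rel a t m /\ evalrel w' m s
  end.

Definition sim (w w' : seq letter) : Prop :=
  exists u s, wf u /\ evalrel w u s /\ evalrel w' u s.

Definition pos_word (u : seq gen) : seq letter := map (pair true) u.

Definition valid_relations (R : seq gen -> seq gen -> Prop) : Prop :=
  forall u v, R u v ->
    forall t, wf t -> forall s, evalrel (pos_word u) t s <-> evalrel (pos_word v) t s.

(** The geometry group [G_L]: words over the generators and their inverses
    modulo the congruence generated by free cancellation and the relations [R].
    Elements of [G_L] are represented by such words ([gword]); equality in
    [G_L] is [gcong R]. *)
Definition gword := seq letter.
Definition ginv (a : letter) : letter := (~~ a.1, a.2).

Inductive gcong (R : seq gen -> seq gen -> Prop) : gword -> gword -> Prop :=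
| gc_refl u : gcong R u u
| gc_sym u v : gcong R u v -> gcong R v u
| gc_trans u v w : gcong R u v -> gcong R v w -> gcong R u w
| gc_free u v a : gcong R (u ++ a :: ginv a :: v) (u ++ v)
| gc_rel u v a b : R a b -> gcong R (u ++ pos_word a ++ v) (u ++ pos_word b ++ v).

(** [eval : W_L -> G_L], [O^+ |-> g], [O^- |-> g^-1]: the word itself,
    read as a representative in [G_L]. *)
Definition geval (w : seq letter) : gword := w.

(** [phi] (on representatives) induces an injective endomorphism of [G_L]. *)
Definition injective_endo (R : seq gen -> seq gen -> Prop) (phi : gword -> gword) : Prop :=
  [/\ (forall u v, gcong R u v -> gcong R (phi u) (phi v)),
      (forall u v, gcong R (phi (u ++ v)) (phi u ++ phi v)) &
      (forall u v, gcong R (phi u) (phi v) -> gcong R u v)].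

Definition blueprint (R : seq gen -> seq gen -> Prop) (phi : gword -> gword)
  (Cc : term -> gword) : Prop :=
  forall t, in_Tx t -> forall (w : seq letter) s, evalrel w t s ->
    gcong R (Cc s) (Cc t ++ phi (geval w)).

End Geometry.

From mathcomp Require Import all_boot.

Set Implicit Arguments. Unset Strict Implicit. Unset Printing Implicit Defensive.

(* Collapsing every variable onto [x] turns a common witness [u] of
   [eval w ~ eval w'] into a term [t] of [T_Sigma(x)] on which both words are
   still defined with a common value [s], because rewriting commutes with
   substitution.  The blueprint property then gives
   [Cc(t) phi(w) = Cc(s) = Cc(t) phi(w')] in [G_L]; cancelling [Cc(t)] and
   using injectivity of [phi] yields [w = w']. *)

Section Substitution.
Variable F : Type.
Variable ar : F -> nat.

Lemma term_nested_ind (P : term F -> Prop) :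
  (forall v, P (Var F v)) ->
  (forall f ts, (forall i, i < size ts -> P (nth (Var F 0) ts i)) -> P (App f ts)) ->
  forall t, P t.
Proof.
move=> Pvar Papp; fix IH 1 => -[v|f ts]; first exact: Pvar.
apply: Papp; elim: ts => [|t ts IHts] [|i] /= Hi; [by []|by []|exact: IH|exact: IHts].
Qed.

Lemma subst_comp (sg s : nat -> term F) (t : term F) :
  subst sg (subst s t) = subst (fun v => subst sg (s v)) t.
Proof.
elim/term_nested_ind: t => [//|f ts IH] /=; congr App.
rewrite -map_comp; apply: (@eq_from_nth _ (Var F 0)); rewrite !size_map // => i Hi.
by rewrite !(nth_map (Var F 0)) //= IH.
Qed.

Lemma rewr_subst (l r : term F) t a t' sg :
  rewr l r t a t' -> rewr l r (subst sg t) a (subst sg t').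
Proof.
elim=> [s|f ts1 u u' ts2 p a' Hp _ IH] /=; first by rewrite !subst_comp; apply: rw_here.
by rewrite !map_cat /=; apply: rw_in; rewrite ?size_map.
Qed.

Lemma wf_subst sg t : (forall v, wf ar (sg v)) -> wf ar t -> wf ar (subst sg t).
Proof.
move=> wf_sg; elim=> [v|f ts Hs _ IH] //=.
apply: wf_app; rewrite size_map // => i Hi.
by rewrite (nth_map (Var F 0)) //; apply: IH.
Qed.

Lemma occurs_subst v (sg : nat -> term F) t :
  occurs v (subst sg t) -> exists2 n, occurs n t & occurs v (sg n).
Proof.
elim/term_nested_ind: t => [n|f ts IH] /=; first by exists n; first exact: occ_var.
move Ets' : (App f _) => t' Hocc; case: Hocc Ets' => // g us i Hi Hoi [_ Eus].
move: Hi Hoi; rewrite -Eus size_map => Hi; rewrite (nth_map (Var F 0)) //.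
by case/(IH _ Hi) => n Hn Hv; exists n => //; apply: occ_app Hn.
Qed.

Lemma occurs_var v n : occurs v (Var F n) -> v = n.
Proof. by move En : (Var F n) => t Hv; case: Hv En => [|f ts i _ _] // [->]. Qed.

Lemma in_Tx_subst_x t : wf ar t -> in_Tx ar (subst (fun=> Var F 0) t).
Proof.
move=> wf_t; split; first by apply: wf_subst => // v; apply: wf_var.
by move=> v /occurs_subst[n _ /occurs_var].
Qed.

Variable I : Type.
Variable law : I -> term F * term F.

Lemma evalrel_subst sg w t s :
  evalrel law w t s -> evalrel law w (subst sg t) (subst sg s).
Proof.
elim: w t => [|a w IH] t /=; first by move->.
case=> m [Ha Hm]; exists (subst sg m); split; last exact: IH.
by move: Ha; rewrite /letter_rel /opP; case: a.1; apply: rewr_subst.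
Qed.

End Substitution.

Section GeometryGroup.
Variable I : Type.
Variable R : seq (gen I) -> seq (gen I) -> Prop.

Lemma gcong_catl x u v : gcong R u v -> gcong R (x ++ u) (x ++ v).
Proof.
elim=> {u v} [u|u v _ IH|u v w _ IH1 _ IH2|u v a|u v a b Hab].
- exact: gc_refl.
- exact: gc_sym.
- exact: gc_trans IH2.
- by rewrite !catA; apply: gc_free.
- by rewrite !catA -(catA _ (pos_word a)) -(catA _ (pos_word b)); apply: gc_rel.
Qed.

Definition winv (x : gword I) : gword I := rev (map (@ginv I) x).

Lemma ginvK : involutive (@ginv I).
Proof. by case=> b g; rewrite /ginv /= negbK. Qed.

Lemma winv_cancel x u : gcong R (winv x ++ x ++ u) u.
Proof.
elim: x => [|a x IH] /=; first exact: gc_refl.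
rewrite /winv /= rev_cons -cats1 -catA /=; apply: gc_trans IH.
by have := gc_free R (winv x) (x ++ u) (ginv a); rewrite ginvK.
Qed.

Lemma gcong_cancell x u v : gcong R (x ++ u) (x ++ v) -> gcong R u v.
Proof.
move=> /(gcong_catl (winv x)) Hxuv.
exact: gc_trans (gc_sym (winv_cancel x u)) (gc_trans Hxuv (winv_cancel x v)).
Qed.

End GeometryGroup.

Theorem proposition4p8 (F : Type) (ar : F -> nat) (I : Type)
  (law : I -> term F * term F)
  (Hlaws_wf : forall i, wf ar (law i).1 /\ wf ar (law i).2)
  (Hbalanced : forall i, balanced (law i))
  (R : seq (gen I) -> seq (gen I) -> Prop)
  (HR : valid_relations ar law R)
  (phi : gword I -> gword I) (Hphi : injective_endo R phi)
  (Cc : term F -> gword I) (HCc : blueprint ar law R phi Cc)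
  (w w' : seq (letter I)) :
  sim ar law w w' -> gcong R (geval w) (geval w').
Proof.
case=> u [s [wf_u [Hw Hw']]].
pose x : nat -> term F := fun=> Var F 0.
have Tx_u : in_Tx ar (subst x u) by apply: in_Tx_subst_x.
have Cc_w := HCc _ Tx_u _ _ (evalrel_subst x Hw).
have Cc_w' := HCc _ Tx_u _ _ (evalrel_subst x Hw').
case: Hphi => _ _ phi_inj; apply: phi_inj.
exact: gcong_cancell (gc_trans (gc_sym Cc_w) Cc_w').
Qed.
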